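(* Let $\mathcal S=(\mathcal P,\mathcal L)$ be a linear space with $v$ points and constant line size $k$, $2<k<v$, let $G\le\mathrm{Aut}(\mathcal S)$ be transitive on lines, and let $\mathfrak C$ be a non-trivial $G$-invariant partition of $\mathcal P$ with $d$ classes of size $c$. Then (i) $|\mathrm{spec}\,\mathcal S|\ge 2$; (ii) $c\notin\mathrm{spec}\,\mathcal S$; (iii) if $\mathrm{spec}\,\mathcal S=\{1,h\}$ with $h\ge 2$, then for each class $C\in\mathfrak C$ the induced linear space $\mathcal S|_C$ has constant line size $h$.
   Context: A linear space $\mathcal S=(\mathcal P,\mathcal L)$: a finite set $\mathcal P$ of points and a set $\mathcal L$ of subsets (lines) such that any two distinct points lie on exactly one line and each line has at least two points. Line-transitivity of $G$ implies point-transitivity. A partition is non-trivial if it has more than one class and its classes have more than one element; $G$-invariant means $G$ permutes the classes. For a line $\lambda$ and $i\ge0$, let $d_i$ be the number of classes $C\in\mathfrak C$ with $|C\cap\lambda|=i$ (independent of $\lambda$ by line-transitivity); $\mathrm{spec}\,\mathcal S=\{i>0: d_i\ne0\}$. For $F\subseteq\mathcal P$ with $|F|\ge2$, the induced linear space is $\mathcal S|_F=(F,\{\lambda\cap F:\lambda\in\mathcal L,\ |\lambda\cap F|\ge2\})$. *)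

From mathcomp Require Import all_boot fingroup perm.
Set Implicit Arguments. Unset Strict Implicit. Unset Printing Implicit Defensive.

Definition linear_space (T : finType) (L : {set {set T}}) : Prop :=
  (forall l, l \in L -> 1 < #|l|) /\
  (forall x y : T, x != y -> exists! l, [/\ l \in L, x \in l & y \in l]).

Definition const_line_size (T : finType) (L : {set {set T}}) (k : nat) : Prop :=
  forall l, l \in L -> #|l| = k.

Definition is_aut (T : finType) (L : {set {set T}}) (g : {perm T}) : Prop :=
  [set g @: (l : {set T}) | l in L] = L.

Definition aut_group (T : finType) (L : {set {set T}}) (G : {group {perm T}}) : Prop :=
  forall g, g \in G -> is_aut L g.

Definition line_transitive (T : finType) (L : {set {set T}}) (G : {group {perm T}}) : Prop :=
  forall l1 l2, l1 \in L -> l2 \in L -> exists2 g, g \in G & g @: l1 = l2.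

Definition G_invariant (T : finType) (G : {group {perm T}}) (P : {set {set T}}) : Prop :=
  forall g C, g \in G -> C \in P -> g @: C \in P.

Definition nontrivial_partition (T : finType) (P : {set {set T}}) : Prop :=
  partition P [set: T] /\ 1 < #|P| /\ (forall C, C \in P -> 1 < #|C|).

Definition dnum (T : finType) (P : {set {set T}}) (l : {set T}) (i : nat) : nat :=
  #|[set C in P | #|C :&: l| == i]|.

(* spec S = { i > 0 : d_i <> 0 }.  Since d_i does not depend on the line
   (line-transitivity), we take i in spec iff d_i(l) <> 0 for some line l. *)
Definition spec (T : finType) (L : {set {set T}}) (P : {set {set T}}) (i : nat) : bool :=
  (0 < i) && [exists l in L, dnum P l i != 0].

(* The induced linear space S|_F has constant line size h: every line meeting
   F in at least two points meets it in exactly h points. *)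
Definition induced_const_line_size (T : finType) (L : {set {set T}}) (F : {set T}) (h : nat) : Prop :=
  forall l, l \in L -> 2 <= #|l :&: F| -> #|l :&: F| = h.

From mathcomp Require Import all_boot fingroup perm.
From mathcomp Require Import zify.
Set Implicit Arguments. Unset Strict Implicit. Unset Printing Implicit Defensive.

(* Fix a point x of a class C and count the points of C \ {x} and of the
   complement of C along the r lines through x: c - 1 = sum (|C ∩ l| - 1) and
   v - c = sum (k - |C ∩ l|).  If every line met C in the same number i of
   points, then c - 1 = r (i - 1) and v - c = r (k - i); since c divides v and
   is coprime to c - 1, c would divide k - i > 0, contradicting
   c - 1 >= r >= k.  If some line contained a whole class, line-transitivity
   would put a class inside every line; a class of two or more points
   determines its line, so, with b lines and d classes, b <= d < v <= b by
   Fisher's inequality.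
   Neither argument needs G to act by automorphisms of the linear space. *)

Definition line_through (T : finType) (L : {set {set T}}) (x y : T) : {set T} :=
  odflt set0 [pick l in L | (x \in l) && (y \in l)].

Definition pencil (T : finType) (L : {set {set T}}) (x : T) : {set {set T}} :=
  [set l in L | x \in l].

Lemma sum_card_setI (T : finType) (A : {set {set T}}) (S : {set T}) :
  \sum_(l in A) #|l :&: S| = \sum_(y in S) #|[set l in A | y \in l]|.
Proof.
have meet l : #|l :&: S| = \sum_(y in S) (y \in l).
  rewrite -sum1_card big_mkcond [RHS]big_mkcond; apply: eq_bigr => y _.
  by rewrite inE; case: (y \in l); case: (y \in S).
under eq_bigr => l _ do rewrite meet.
rewrite exchange_big; apply: eq_bigr => y _.
rewrite -sum1_card big_mkcond [RHS]big_mkcond; apply: eq_bigr => l _.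
by rewrite inE; case: (l \in A); case: (y \in l).
Qed.

Lemma double_card_partition_le (T : finType) (P : {set {set T}}) (D : {set T}) :
  partition P D -> (forall C, C \in P -> 1 < #|C|) -> #|P|.*2 <= #|D|.
Proof. by move=> /card_partition-> P_gt1; rewrite -muln2 -sum_nat_const leq_sum. Qed.

Lemma spec_card_setI (T : finType) (L P : {set {set T}}) l C :
  l \in L -> C \in P -> 0 < #|C :&: l| -> spec L P #|C :&: l|.
Proof.
move=> lL CP meet_gt0; rewrite /spec meet_gt0; apply/exists_inP; exists l => //.
by rewrite /dnum -lt0n; apply/card_gt0P; exists C; rewrite inE CP eqxx.
Qed.

Lemma induced_const_line_size_of_spec (T : finType) (L P : {set {set T}}) C h :
  C \in P -> (forall i, spec L P i = (i == 1) || (i == h)) ->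
  induced_const_line_size L C h.
Proof.
move=> CP spec1h l lL meet_ge2; rewrite setIC in meet_ge2 *.
have := spec_card_setI lL CP (ltnW meet_ge2).
by rewrite spec1h => /orP[/eqP meet1 | /eqP //]; rewrite meet1 in meet_ge2.
Qed.

Section LinearSpace.
Variables (T : finType) (L : {set {set T}}).
Hypothesis HL : linear_space L.

Lemma line_throughP x y : x != y ->
  [/\ line_through L x y \in L, x \in line_through L x y & y \in line_through L x y].
Proof.
move=> xy; rewrite /line_through; case: pickP => [l /andP[lL /andP[]] | /= no_line] //.
have [_ /(_ x y xy) [l [[lL xl yl] _]]] := HL.
by have := no_line l; rewrite lL xl yl.
Qed.

Lemma line_through_uniq x y l : x != y -> l \in L -> x \in l -> y \in l ->
  l = line_through L x y.
Proof.
move=> xy lL xl yl; have [mL xm ym] := line_throughP xy.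
have [_ /(_ x y xy) [l0 [_ l0_uniq]]] := HL.
by rewrite -(l0_uniq l) // -(l0_uniq (line_through L x y)).
Qed.

Lemma lines_eq_of_setI_gt1 l1 l2 :
  l1 \in L -> l2 \in L -> 1 < #|l1 :&: l2| -> l1 = l2.
Proof.
move=> l1L l2L /card_gt1P [a [b [/setIP [al1 al2] /setIP [bl1 bl2] ab]]].
by rewrite (line_through_uniq ab l1L al1 bl1) (line_through_uniq ab l2L al2 bl2).
Qed.

Lemma card_sum_pencil x (S : {set T}) : x \notin S ->
  #|S| = \sum_(l in pencil L x) #|l :&: S|.
Proof.
move=> xS; rewrite sum_card_setI -sum1_card; apply: eq_bigr => y yS.
have xy : x != y by apply: contraNneq xS => ->.
have [lL xl yl] := line_throughP xy.
suff -> : [set l in pencil L x | y \in l] = [set line_through L x y] by rewrite cards1.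
apply/setP => l; rewrite !inE; apply/andP/eqP => [[/andP [l'L xl'] yl'] | ->].
  exact: line_through_uniq.
by rewrite lL xl yl.
Qed.

Lemma card_setD1_pencil x (C : {set T}) : x \in C ->
  #|C| - 1 = \sum_(l in pencil L x) (#|C :&: l| - 1).
Proof.
move=> xC; rewrite (cardsD1 x C) xC add1n subn1 (@card_sum_pencil x); last first.
  by rewrite !inE eqxx.
apply: eq_bigr => l; rewrite inE => /andP[_ xl].
rewrite (cardsD1 x (C :&: l)) !inE xC xl add1n subn1; apply: eq_card => z.
by rewrite !inE andbC -andbA.
Qed.

Lemma card_lines_le_classes (P : {set {set T}}) :
  (forall C, C \in P -> 1 < #|C|) ->
  (forall l, l \in L -> exists2 C, C \in P & C \subset l) -> #|L| <= #|P|.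
Proof.
move=> P_gt1 line_class.
pose cls (l : {set T}) := odflt set0 [pick C in P | C \subset l].
have clsP l : l \in L -> cls l \in P /\ cls l \subset l.
  move=> /line_class [C CP Cl]; rewrite /cls.
  by case: pickP => [C' /andP[] | /(_ C)] //=; rewrite CP Cl.
have cls_inj : {in L &, injective cls}.
  move=> l1 l2 l1L l2L cls12; apply: lines_eq_of_setI_gt1 => //.
  have [[C1P C1l1] [_ C2l2]] := (clsP _ l1L, clsP _ l2L).
  apply: leq_trans (P_gt1 _ C1P) (subset_leq_card _).
  by rewrite subsetI C1l1 cls12 C2l2.
rewrite -(card_in_imset cls_inj); apply: subset_leq_card.
by apply/subsetP => _ /imsetP [l lL ->]; case: (clsP l lL).
Qed.

End LinearSpace.

Section ConstantLineSize.
Variables (T : finType) (L : {set {set T}}) (k : nat).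
Hypotheses (HL : linear_space L) (HLk : const_line_size L k).
Hypotheses (k_gt0 : 0 < k) (k_ltv : k < #|T|).

Lemma exists_line_avoiding x : exists2 l, l \in L & x \notin l.
Proof.
have /card_gt0P [y] : 0 < #|[set~ x]| by rewrite cardsC1; lia.
rewrite !inE eq_sym => xy; have [mL xm ym] := line_throughP HL xy.
have /card_gt0P [z] : 0 < #|~: line_through L x y|.
  by have := cardsC (line_through L x y); rewrite (HLk mL); lia.
rewrite inE => zm; have yz : y != z by apply: contraNneq zm => <-.
have [lL yl zl] := line_throughP HL yz.
exists (line_through L y z) => //; apply: contra zm => xl.
by rewrite -(line_through_uniq HL xy lL xl yl).
Qed.

Lemma card_pencil_ge x : k <= #|pencil L x|.
Proof.
have [l lL xl] := exists_line_avoiding x.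
rewrite -(HLk lL) (card_sum_pencil HL xl) -sum1_card.
apply: leq_sum => m; rewrite inE => /andP[mL xm]; rewrite leqNgt.
by apply: contraNN xl => /(lines_eq_of_setI_gt1 HL mL lL) <-.
Qed.

Lemma card_points_le_lines : #|T| <= #|L|.
Proof.
have := sum_card_setI L [set: T].
under eq_bigr => l lL do rewrite setIT (HLk lL).
rewrite sum_nat_const => incidences.
rewrite -(leq_pmul2r k_gt0) incidences -cardsT -sum_nat_const.
by apply: leq_sum => x _; apply: card_pencil_ge.
Qed.

Lemma card_setC_pencil x (C : {set T}) : x \in C ->
  #|T| - #|C| = \sum_(l in pencil L x) (k - #|C :&: l|).
Proof.
move=> xC; rewrite -(cardsC C) addKn (@card_sum_pencil _ _ HL x); last first.
  by rewrite inE negbK.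
apply: eq_bigr => l; rewrite inE => /andP[lL _].
by rewrite -(HLk lL) -(cardsID C l) (setIC C l) addKn setDE.
Qed.

Lemma pencil_meet_nonconstant x (C : {set T}) i :
  x \in C -> 1 < #|C| < #|T| -> #|C| %| #|T| ->
  exists2 l, l \in pencil L x & #|C :&: l| != i.
Proof.
move=> xC /andP[C_gt1 C_ltv] C_dvd_v; apply/exists_inP.
apply: contraT; rewrite negb_exists_in => /forall_inP meet_i.
have {}meet_i l : l \in pencil L x -> #|C :&: l| = i by move/meet_i/negbNE/eqP.
set r := #|pencil L x|.
have inside : #|C| - 1 = r * (i - 1).
  by rewrite (card_setD1_pencil HL xC) -sum_nat_const; apply: eq_bigr => l /meet_i ->.
have outside : #|T| - #|C| = r * (k - i).
  by rewrite (card_setC_pencil xC) -sum_nat_const; apply: eq_bigr => l /meet_i ->.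
have r_ge_k : k <= r := card_pencil_ge x.
have coprime_C : coprime #|C| (#|C| - 1).
  by have := coprimeSn (#|C| - 1); rewrite subn1 prednK // ltnW.
have C_dvd : #|C| %| k - i.
  rewrite -(Gauss_dvdr _ coprime_C) inside mulnAC -outside.
  by apply: dvdn_mulr; apply: dvdn_sub.
have k_gt_i : 0 < k - i by move: outside; nia.
have := dvdn_leq k_gt_i C_dvd; nia.
Qed.

Lemma spec_two_values (P : {set {set T}}) C :
  C \in P -> 1 < #|C| < #|T| -> #|C| %| #|T| ->
  exists i j, [/\ i != j, spec L P i & spec L P j].
Proof.
move=> CP C_bounds C_dvd_v.
have /card_gt0P [x xC] : 0 < #|C| by case/andP: C_bounds => /ltnW.
have /card_gt0P [l0 l0x] : 0 < #|pencil L x| := leq_trans k_gt0 (card_pencil_ge x).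
have [l lx meet_ne] := pencil_meet_nonconstant #|C :&: l0| xC C_bounds C_dvd_v.
have spec_pencil m : m \in pencil L x -> spec L P #|C :&: m|.
  rewrite inE => /andP[mL xm]; apply: spec_card_setI => //.
  by apply/card_gt0P; exists x; rewrite inE xC.
by exists #|C :&: l|, #|C :&: l0|; split; rewrite ?spec_pencil.
Qed.

Lemma no_class_in_line G (P : {set {set T}}) C l0 :
  line_transitive L G -> G_invariant G P ->
  partition P [set: T] -> (forall C, C \in P -> 1 < #|C|) ->
  C \in P -> l0 \in L -> ~~ (C \subset l0).
Proof.
move=> Gtr Ginv Ppart P_gt1 CP l0L; apply/negP => Cl0.
have line_class l : l \in L -> exists2 C', C' \in P & C' \subset l.
  move=> lL; have [g gG <-] := Gtr _ _ l0L lL.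
  by exists (g @: C); [apply: Ginv | apply: imsetS].
have := card_lines_le_classes HL P_gt1 line_class.
have := double_card_partition_le Ppart P_gt1; rewrite cardsT.
have := card_points_le_lines.
have : 0 < #|L| by apply/card_gt0P; exists l0.
lia.
Qed.

Lemma spec_class_size G (P : {set {set T}}) c :
  line_transitive L G -> G_invariant G P ->
  partition P [set: T] -> 1 < c -> (forall C, C \in P -> #|C| = c) ->
  ~~ spec L P c.
Proof.
move=> Gtr Ginv Ppart c_gt1 Pc; apply/negP => /andP[_ /exists_inP [l lL]].
rewrite /dnum -lt0n => /card_gt0P [C]; rewrite inE => /andP[CP /eqP meet_c].
have P_gt1 C' : C' \in P -> 1 < #|C'| by move/Pc->.
have := no_class_in_line Gtr Ginv Ppart P_gt1 CP lL.
suff -> : C \subset l by [].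
by apply/setIidPl/eqP; rewrite eqEcard subsetIl meet_c (Pc _ CP) /=.
Qed.

End ConstantLineSize.

Theorem theorem4p2 (T : finType) (L : {set {set T}}) (k : nat)
  (G : {group {perm T}}) (P : {set {set T}}) (c d : nat) :
  linear_space L -> const_line_size L k -> 2 < k -> k < #|T| ->
  aut_group L G -> line_transitive L G ->
  nontrivial_partition P -> G_invariant G P ->
  #|P| = d -> (forall C, C \in P -> #|C| = c) ->
  [/\ exists i j, [/\ i != j, spec L P i & spec L P j],
      ~~ spec L P c
    & forall h, 2 <= h -> (forall i, spec L P i = (i == 1) || (i == h)) ->
        forall C, C \in P -> induced_const_line_size L C h].
Proof.
move=> HL HLk k_gt2 k_ltv _ Gtr [Ppart [P_gt1 C_gt1]] Ginv _ Pc.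
have k_gt0 : 0 < k by apply: leq_trans k_gt2.
have [C CP] : exists C, C \in P by apply/card_gt0P; apply: ltnW.
have c_gt1 : 1 < c by rewrite -(Pc _ CP) C_gt1.
have v_dc : #|T| = #|P| * c.
  by rewrite -cardsT (card_partition Ppart) -sum_nat_const; apply: eq_bigr.
split.
- apply: (spec_two_values HL HLk k_gt0 k_ltv CP); rewrite (Pc _ CP) v_dc.
    by rewrite c_gt1 ltn_Pmull // ltnW.
  exact: dvdn_mull.
- exact: (spec_class_size HL HLk k_gt0 k_ltv Gtr Ginv Ppart c_gt1 Pc).
- by move=> h _ spec1h C' C'P; apply: induced_const_line_size_of_spec C'P spec1h.
Qed.
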